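(* Let $H\ge 2$ and let $\mathcal C=\{\boldsymbol g^1,\dots,\boldsymbol g^K\}\subset\mathcal G$ be a codebook containing the true goal $\boldsymbol g^*=\boldsymbol g^{k^*}$. Let the observed action trajectory $\boldsymbol a_{0:H-1}=\boldsymbol a^j_{0:H-1}$ be generated by agent $j$ under $\boldsymbol g^*$, i.e. there are beliefs $\boldsymbol b^j_0,\dots,\boldsymbol b^j_{H-1}\in\mathbb R^{d_b}$ with $\boldsymbol b^j_{t+1}=\mathcal D^j(\boldsymbol b^j_t,\boldsymbol a_t,\boldsymbol g^* )$ and $\boldsymbol a_{t+1}=\pi^j(\boldsymbol b^j_{t+1},\boldsymbol g^* )$ for $t=0,\dots,H-2$. Assume that $\pi(\cdot,\boldsymbol g)$ is $\xi_\pi$-Lipschitz in $\boldsymbol b$ and $\mathcal D(\cdot,\boldsymbol a,\boldsymbol g)$ is $\xi_{\mathcal D}$-Lipschitz in $\boldsymbol b$. Define for $t=0,\dots,H-2$ the mismatches $\Delta\boldsymbol b^j_t:=\Omega(\boldsymbol a_t,\boldsymbol g^* )-\boldsymbol b^j_t$, $\Delta\mathcal D_t(\boldsymbol b):=\mathcal D(\boldsymbol b,\boldsymbol a_t,\boldsymbol g^* )-\mathcal D^j(\boldsymbol b,\boldsymbol a_t,\boldsymbol g^* )$, $\Delta\pi_{t+1}:=\pi^j(\boldsymbol b^j_{t+1},\boldsymbol g^* )-\pi(\boldsymbol b^j_{t+1},\boldsymbol g^* )$, $\varepsilon_t:=\|\Delta\mathcal D_t(\boldsymbol b^j_t)\|+\xi_{\mathcal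 D}\|\Delta\boldsymbol b^j_t\|$, and the behavioral-mismatch energy $$\delta_{\mathrm{act}}:=\Big(\sum_{t=0}^{H-2}\big(\|\Delta\pi_{t+1}\|+\xi_\pi\|\varepsilon_t\|\big)^2\Big)^{1/2}.$$ If $\delta_{\mathrm{act}}<\bar\gamma_H(\mathcal C;\boldsymbol g^* )/2$, then the nearest-neighbor estimator $\hat k=\arg\min_k\|\Phi_H(\boldsymbol g^k)\|_2$ returns $\hat{\boldsymbol g}=\boldsymbol g^{\hat k}=\boldsymbol g^*$.
   Context: Actions lie in $\mathbb R^{d_a}$, beliefs in $\mathbb R^{d_b}$, goals in a set $\mathcal G\subseteq\mathbb R^{d_g}$. The (ego) agent has continuously differentiable models: an inverse belief predictor $\Omega:\mathbb R^{d_a}\times\mathcal G\to\mathbb R^{d_b}$, a forward dynamics model $\mathcal D:\mathbb R^{d_b}\times\mathbb R^{d_a}\times\mathcal G\to\mathbb R^{d_b}$, and a policy $\pi:\mathbb R^{d_b}\times\mathcal G\to\mathbb R^{d_a}$. The observed agent $j$ has its own dynamics $\mathcal D^j$ and policy $\pi^j$ of the same types. Given the trajectory $\boldsymbol a_{0:H-1}$ and a candidate goal $\boldsymbol g\in\mathcal G$, set $F_{\boldsymbol g}(\boldsymbol a):=\pi\big(\mathcal D(\Omega(\boldsymbol a,\boldsymbol g),\boldsymbol a,\boldsymbol g),\boldsymbol g\big)$, the one-step residual $\phi_t(\boldsymbol g):=\boldsymbol a_{t+1}-F_{\boldsymbol g}(\boldsymbol a_t)$, the stacked residual $\Phi_H(\boldsymbol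 g):=[\phi_0(\boldsymbol g);\phi_1(\boldsymbol g);\dots;\phi_{H-2}(\boldsymbol g)]\in\mathbb R^{(H-1)d_a}$, and $d_H(\boldsymbol g):=\|\Phi_H(\boldsymbol g)\|_2$. For a codebook $\mathcal C=\{\boldsymbol g^1,\dots,\boldsymbol g^K\}$ with $\boldsymbol g^*=\boldsymbol g^{k^*}$, the residual margin is $\bar\gamma_H(\mathcal C;\boldsymbol g^* ):=\min_{k\ne k^*}\|\Phi_H(\boldsymbol g^k)-\Phi_H(\boldsymbol g^* )\|_2$. *)

From HB Require Import structures.
From mathcomp Require Import all_boot all_order all_algebra.
From mathcomp Require Import boolp classical_sets reals constructive_ereal.
Set Implicit Arguments. Unset Strict Implicit. Unset Printing Implicit Defensive.
Import Order.TTheory GRing.Theory Num.Theory.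
Local Open Scope ring_scope.
Local Open Scope ereal_scope.
Local Open Scope ring_scope.

Section Defs.
Variable R : realType.

Definition enorm n (v : 'rV[R]_n) : R := Num.sqrt (\sum_(i < n) v 0 i ^+ 2).

Variables (da db dg : nat).
Variable Omega : 'rV[R]_da -> 'rV[R]_dg -> 'rV[R]_db.
Variable D : 'rV[R]_db -> 'rV[R]_da -> 'rV[R]_dg -> 'rV[R]_db.
Variable pi : 'rV[R]_db -> 'rV[R]_dg -> 'rV[R]_da.

Definition Fmap (g : 'rV[R]_dg) (x : 'rV[R]_da) : 'rV[R]_da :=
  pi (D (Omega x g) x g) g.

Definition phi (a : nat -> 'rV[R]_da) (t : nat) (g : 'rV[R]_dg) : 'rV[R]_da :=
  a t.+1 - Fmap g (a t).

(* d_H(g) = || Phi_H(g) ||_2, the 2-norm of the stack [phi_0; ...; phi_{H-2}],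
   written out as the square root of the sum of squared block norms *)
Definition dH (H : nat) (a : nat -> 'rV[R]_da) (g : 'rV[R]_dg) : R :=
  Num.sqrt (\sum_(t < H.-1) enorm (phi a t g) ^+ 2).

Definition Phi_dist (H : nat) (a : nat -> 'rV[R]_da) (g g' : 'rV[R]_dg) : R :=
  Num.sqrt (\sum_(t < H.-1) enorm (phi a t g - phi a t g') ^+ 2).

(* residual margin gamma_H(C; g^{k*}) = min_{k <> k*} ||Phi_H(g^k) - Phi_H(gstar)||,
   valued in the extended reals (min over the empty set = +oo) *)
Definition margin (H : nat) (a : nat -> 'rV[R]_da) (K : nat)
    (C : 'I_K -> 'rV[R]_dg) (kstar : 'I_K) : \bar R :=
  (\big[Order.min/+oo]_(k < K | k != kstar) (Phi_dist H a (C k) (C kstar))%:E)%E.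

End Defs.

Section Mismatch.
Variable R : realType.
Variables (da db dg : nat).
Variable Omega : 'rV[R]_da -> 'rV[R]_dg -> 'rV[R]_db.
Variable D Dj : 'rV[R]_db -> 'rV[R]_da -> 'rV[R]_dg -> 'rV[R]_db.
Variable pi pij : 'rV[R]_db -> 'rV[R]_dg -> 'rV[R]_da.
Variables (xi_pi xi_D : R).
Variables (a : nat -> 'rV[R]_da) (b : nat -> 'rV[R]_db) (gstar : 'rV[R]_dg).

Definition eps_t (t : nat) : R :=
  enorm (D (b t) (a t) gstar - Dj (b t) (a t) gstar)
  + xi_D * enorm (Omega (a t) gstar - b t).

Definition delta_act (H : nat) : R :=
  Num.sqrt (\sum_(t < H.-1)
    (enorm (pij (b t.+1) gstar - pi (b t.+1) gstar) + xi_pi * `|eps_t t|) ^+ 2).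

End Mismatch.

From HB Require Import structures.
From mathcomp Require Import all_boot all_order all_algebra.
From mathcomp Require Import boolp classical_sets reals constructive_ereal.
From mathcomp Require Import ring lra.
Import Order.TTheory GRing.Theory Num.Theory.
Set Implicit Arguments. Unset Strict Implicit. Unset Printing Implicit Defensive.
Local Open Scope ring_scope.

(** Write [g*] for the true goal and [o_t] for [Omega a_t g*].  Along the
    observed trajectory, the residual [phi_t] at [g*] is the policy mismatch
    plus the [pi]-image of the belief error [b_(t+1) - D o_t a_t g*], and that
    error is at most [eps_t] by the Lipschitz property of [D]; hence [d_H] at
    [g*] is at most [delta_act].  For a codeword [g^k <> g*], the triangle
    inequality for the stacked residuals gives [margin <= d_H(g^k) + d_H] at
    [g*], so [d_H(g^k) > delta_act] and [g^k] cannot minimise [d_H]. *)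

Section L2Norm.
Variable R : rcfType.

Definition l2norm n (x : 'I_n -> R) : R := Num.sqrt (\sum_i x i ^+ 2).

Lemma l2norm_ge0 n (x : 'I_n -> R) : 0 <= l2norm x.
Proof. exact: sqrtr_ge0. Qed.

Lemma lagrange_identity n (x y : 'I_n -> R) :
  2 * ((\sum_i x i ^+ 2) * (\sum_i y i ^+ 2) - (\sum_i x i * y i) ^+ 2) =
  \sum_i \sum_j (x i * y j - x j * y i) ^+ 2.
Proof.
rewrite [RHS](eq_bigr (fun i => \sum_j (x i ^+ 2 * y j ^+ 2 + x j ^+ 2 * y i ^+ 2
                                        - 2 * (x i * y i * (x j * y j))))); last first.
  by move=> i _; apply: eq_bigr => j _; ring.
rewrite [RHS](eq_bigr (fun i => x i ^+ 2 * \sum_j y j ^+ 2 + y i ^+ 2 * \sum_j x j ^+ 2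
                                 - 2 * (x i * y i * \sum_j x j * y j))); last first.
  move=> i _; rewrite sumrB big_split /= !mulr_sumr.
  by congr (_ + _ - _); apply: eq_bigr => j _; rewrite mulrC.
by rewrite sumrB big_split /= -!mulr_sumr -!mulr_suml; ring.
Qed.

Lemma sum_mul_le_l2norm n (x y : 'I_n -> R) :
  \sum_i x i * y i <= l2norm x * l2norm y.
Proof.
have sq_ge0 (z : 'I_n -> R) : 0 <= \sum_i z i ^+ 2 by apply: sumr_ge0 => i _; apply: sqr_ge0.
have cauchy_schwarz : (\sum_i x i * y i) ^+ 2 <= (\sum_i x i ^+ 2) * (\sum_i y i ^+ 2).
  have := lagrange_identity x y.
  have : 0 <= \sum_i \sum_j (x i * y j - x j * y i) ^+ 2.
    by apply: sumr_ge0 => i _; apply: sumr_ge0 => j _; apply: sqr_ge0.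
  lra.
rewrite -sqrtrM ?sq_ge0 //; apply: le_trans (ler_norm _) _.
by rewrite -sqrtr_sqr ler_wsqrtr.
Qed.

Lemma l2normD n (x y : 'I_n -> R) :
  l2norm (fun i => x i + y i) <= l2norm x + l2norm y.
Proof.
have sq_ge0 (z : 'I_n -> R) : 0 <= \sum_i z i ^+ 2 by apply: sumr_ge0 => i _; apply: sqr_ge0.
have expand : \sum_i (x i + y i) ^+ 2 =
    \sum_i x i ^+ 2 + \sum_i y i ^+ 2 + 2 * \sum_i x i * y i.
  by rewrite mulr_sumr -!big_split /=; apply: eq_bigr => i _; ring.
rewrite -[leRHS]ger0_norm ?addr_ge0 ?l2norm_ge0 // -sqrtr_sqr /l2norm ler_wsqrtr //.
rewrite expand sqrrD !sqr_sqrtr ?sq_ge0 //.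
have := sum_mul_le_l2norm x y; rewrite /l2norm; lra.
Qed.

Lemma l2norm_le n (x y : 'I_n -> R) :
  (forall i, 0 <= x i) -> (forall i, x i <= y i) -> l2norm x <= l2norm y.
Proof.
move=> x_ge0 le_xy; apply: ler_wsqrtr; apply: ler_sum => i _.
by apply: lerXn2r; rewrite ?nnegrE ?(le_trans (x_ge0 i)).
Qed.

End L2Norm.

Section EuclideanNorm.
Variable R : realType.
Lemma enorm_ge0 n (v : 'rV[R]_n) : 0 <= enorm v.
Proof. exact: sqrtr_ge0. Qed.

Lemma enormN n (v : 'rV[R]_n) : enorm (- v) = enorm v.
Proof. by rewrite /enorm; congr Num.sqrt; apply: eq_bigr => i _; rewrite mxE sqrrN. Qed.

Lemma enorm_distC n (u v : 'rV[R]_n) : enorm (u - v) = enorm (v - u).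
Proof. by rewrite -opprB enormN. Qed.

Lemma ler_enormD n (u v : 'rV[R]_n) : enorm (u + v) <= enorm u + enorm v.
Proof.
rewrite /enorm (eq_bigr (fun i => (u 0 i + v 0 i) ^+ 2)) => [|i _]; last by rewrite mxE.
exact: (l2normD (fun i => u 0 i) (fun i => v 0 i)).
Qed.

Lemma ler_enormB n (u v : 'rV[R]_n) : enorm (u - v) <= enorm u + enorm v.
Proof. by rewrite -(enormN v) ler_enormD. Qed.

Lemma ler_enorm_distD n (u v w : 'rV[R]_n) :
  enorm (v - w) <= enorm (v - u) + enorm (u - w).
Proof.
have -> : v - w = (v - u) + (u - w) by rewrite addrA subrK.
exact: ler_enormD.
Qed.

Definition lipschitz m n (f : 'rV[R]_m -> 'rV[R]_n) (c : R) : Prop :=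
  forall x y, enorm (f x - f y) <= c * enorm (x - y).

Lemma lipschitz_neg_enorm0 m n (f : 'rV[R]_m -> 'rV[R]_n) c :
  c < 0 -> lipschitz f c -> forall v : 'rV[R]_m, enorm v = 0.
Proof.
move=> c_lt0 f_lip v; have := f_lip v 0; rewrite subr0.
have := enorm_ge0 (f v - f 0); have := enorm_ge0 v => v_ge0 fv_ge0 le_fv.
by apply/eqP; rewrite eq_le v_ge0 andbT; nra.
Qed.

End EuclideanNorm.

Section ResidualBound.
Variables (R : realType) (da db dg : nat).
Variable Omega : 'rV[R]_da -> 'rV[R]_dg -> 'rV[R]_db.
Variables D Dj : 'rV[R]_db -> 'rV[R]_da -> 'rV[R]_dg -> 'rV[R]_db.
Variables pi pij : 'rV[R]_db -> 'rV[R]_dg -> 'rV[R]_da.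
Variables (xi_pi xi_D : R) (a : nat -> 'rV[R]_da) (b : nat -> 'rV[R]_db).
Variable g : 'rV[R]_dg.
Hypothesis pi_lip : lipschitz (pi^~ g) xi_pi.
Hypothesis D_lip : forall u, lipschitz (fun x => D x u g) xi_D.

Let eps := eps_t Omega D Dj xi_D a b g.

Lemma belief_error_le_eps t :
  b t.+1 = Dj (b t) (a t) g ->
  enorm (b t.+1 - D (Omega (a t) g) (a t) g) <= eps t.
Proof.
move=> ->; apply: le_trans (ler_enorm_distD (D (b t) (a t) g) _ _) _.
rewrite /eps /eps_t enorm_distC (enorm_distC (Omega _ _)).
by rewrite lerD2l; apply: D_lip.
Qed.

Lemma residual_le_mismatch t :
  b t.+1 = Dj (b t) (a t) g -> a t.+1 = pij (b t.+1) g ->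
  enorm (phi Omega D pi a t g)
    <= enorm (pij (b t.+1) g - pi (b t.+1) g) + xi_pi * `|eps t|.
Proof.
move=> b_step a_step; rewrite /phi /Fmap a_step.
apply: le_trans (ler_enorm_distD (pi (b t.+1) g) _ _) _; rewrite lerD2l.
have [xi_ge0 | xi_lt0] := leP 0 xi_pi.
  apply: le_trans (pi_lip _ _) _; rewrite ler_wpM2l //.
  exact: le_trans (belief_error_le_eps b_step) (ler_norm _).
(* For [xi_pi < 0] the belief space is trivial, so every belief norm vanishes. *)
have enorm0 := lipschitz_neg_enorm0 xi_lt0 pi_lip.
by apply: le_trans (pi_lip _ _) _; rewrite /eps /eps_t !enorm0 !mulr0 addr0 normr0 mulr0.
Qed.

Lemma dH_le_delta_act H :
  (forall t, (t.+1 < H)%N ->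
     b t.+1 = Dj (b t) (a t) g /\ a t.+1 = pij (b t.+1) g) ->
  dH Omega D pi H a g <= delta_act Omega D Dj pi pij xi_pi xi_D a b g H.
Proof.
move=> traj; apply: (l2norm_le (fun t : 'I_H.-1 => enorm_ge0 _)) => t.
have [b_step a_step] : b t.+1 = Dj (b t) (a t) g /\ a t.+1 = pij (b t.+1) g.
  by apply: traj; rewrite -ltn_predRL ltn_ord.
exact: residual_le_mismatch.
Qed.

End ResidualBound.

Section NearestCodeword.
Variables (R : realType) (da db dg : nat).
Variable Omega : 'rV[R]_da -> 'rV[R]_dg -> 'rV[R]_db.
Variable D : 'rV[R]_db -> 'rV[R]_da -> 'rV[R]_dg -> 'rV[R]_db.
Variable pi : 'rV[R]_db -> 'rV[R]_dg -> 'rV[R]_da.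
Variables (H : nat) (a : nat -> 'rV[R]_da).
Variables (K : nat) (C : 'I_K -> 'rV[R]_dg) (kstar : 'I_K).

Local Notation dH := (dH Omega D pi H a).
Local Notation Phi_dist := (Phi_dist Omega D pi H a).
Local Notation margin := (margin Omega D pi H a C kstar).

Lemma Phi_dist_le_dH g1 g2 : Phi_dist g1 g2 <= dH g1 + dH g2.
Proof.
apply: le_trans (l2normD _ _); apply: l2norm_le => t; first exact: enorm_ge0.
exact: ler_enormB.
Qed.

Lemma margin_le_Phi_dist k :
  k != kstar -> (margin <= (Phi_dist (C k) (C kstar))%:E)%E.
Proof. by move=> k_neq; rewrite /margin (bigD1 k) //= ge_min lexx. Qed.

Lemma dH_argmin_eq (delta : R) khat :
  dH (C kstar) <= delta -> ((2 * delta)%:E < margin)%E ->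
  (forall k, dH (C khat) <= dH (C k)) -> khat = kstar.
Proof.
move=> dH_star_le margin_gt khat_min; apply/eqP; apply: contraT => khat_neq.
have := lt_le_trans margin_gt (margin_le_Phi_dist khat_neq); rewrite lte_fin.
have := Phi_dist_le_dH (C khat) (C kstar); have := khat_min kstar; lra.
Qed.

End NearestCodeword.

Theorem theorem5p3 (R : realType) (da db dg : nat) (G : set 'rV[R]_dg)
  (Omega : 'rV[R]_da -> 'rV[R]_dg -> 'rV[R]_db)
  (D Dj : 'rV[R]_db -> 'rV[R]_da -> 'rV[R]_dg -> 'rV[R]_db)
  (pi pij : 'rV[R]_db -> 'rV[R]_dg -> 'rV[R]_da)
  (xi_pi xi_D : R)
  (H : nat) (K : nat) (C : 'I_K -> 'rV[R]_dg) (kstar : 'I_K)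
  (a : nat -> 'rV[R]_da) (b : nat -> 'rV[R]_db) :
  (2 <= H)%N ->
  (forall k, G (C k)) ->
  (* trajectory generated by agent j under g* = C kstar *)
  (forall t : nat, (t.+1 < H)%N ->
     b t.+1 = Dj (b t) (a t) (C kstar) /\ a t.+1 = pij (b t.+1) (C kstar)) ->
  (* Lipschitz assumptions in the belief argument *)
  (forall g, G g -> forall x y : 'rV[R]_db,
     enorm (pi x g - pi y g) <= xi_pi * enorm (x - y)) ->
  (forall g, G g -> forall (u : 'rV[R]_da) (x y : 'rV[R]_db),
     enorm (D x u g - D y u g) <= xi_D * enorm (x - y)) ->
  ((2 * delta_act Omega D Dj pi pij xi_pi xi_D a b (C kstar) H)%:E
     < margin Omega D pi H a C kstar)%E ->
  (* every minimizer khat of k |-> d_H(g^k) returns g* *)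
  forall khat : 'I_K,
    (forall k : 'I_K, dH Omega D pi H a (C khat) <= dH Omega D pi H a (C k)) ->
    C khat = C kstar.
Proof.
move=> _ G_C traj pi_lip D_lip margin_gt khat khat_min.
have dH_star_le :=
  dH_le_delta_act Omega (pi_lip _ (G_C kstar)) (D_lip _ (G_C kstar)) traj.
by rewrite (dH_argmin_eq dH_star_le margin_gt khat_min).
Qed.
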